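(* For any context $\Gamma$ and type $T$ of the Scalar type system: if $\Gamma\vdash\mathbf 0:T$ then $T\equiv\overline0$.
   Context: Fix a commutative ring $(\mathcal{S},+,\times)$. Terms: $t,r ::= b \mid (t)\,r \mid \mathbf{0} \mid \alpha.t \mid t+r$, basis terms $b ::= x \mid \lambda x\,t$, modulo associativity and commutativity of $+$. Types: $T ::= U \mid \forall X.T \mid \alpha.T \mid \overline{0}$; unit types: $U ::= X \mid U\to T \mid \forall X.U$. Type variables are only substituted by unit types; $(\alpha.T)[U/X]=\alpha.T[U/X]$. Type equivalence $\equiv$ is the least congruence with $\alpha.\overline0\equiv\overline0$, $0.T\equiv\overline0$, $1.T\equiv T$, $\alpha.(\beta.T)\equiv(\alpha\times\beta).T$, $\forall X.\alpha.T\equiv\alpha.\forall X.T$. A context is a set of distinct term variables with unit types. Typing rules: (ax) $\Gamma,x:U\vdash x:U$; ($\equiv$) from $\Gamma\vdash t:T$ and $T\equiv S$ infer $\Gamma\vdash t:S$; ($\to_E$) from $\Gamma\vdash t:\alpha.(U\to T)$ and $\Gamma\vdash r:\beta.U$ infer $\Gamma\vdash (t)\,r:(\alpha\times\beta).T$; ($\to_I$) from $\Gamma,x:U\vdash t:T$ infer $\Gamma\vdash\lambda x\,t:U\to T$; ($\forall_E$) from $\Gamma\vdash t:\forall X.T$ infer $\Gamma\vdash t:T[U/X]$, $U$ unit; ($\forall_I$) from $\Gamma\vdash t:T$ with $X$ not free in $\Gamma$ infer $\Gamma\vdash t:\forall X.T$; ($ax_{\overline0}$) $\Gamma\vdash\mathbf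 0:\overline0$; ($+_I$) from $\Gamma\vdash t:\alpha.T$ and $\Gamma\vdash r:\beta.T$ infer $\Gamma\vdash t+r:(\alpha+\beta).T$; ($s_I$) from $\Gamma\vdash t:T$ infer $\Gamma\vdash\alpha.t:\alpha.T$. *)

(* Binders (term variables in lambda, type variables in forall) use de Bruijn
   indices, which realizes alpha-equivalence and the freshness conditions. *)
From HB Require Import structures.
From Stdlib Require Import List.
From mathcomp Require Import all_boot all_algebra.
Set Implicit Arguments.
Unset Strict Implicit.
Unset Printing Implicit Defensive.
Import GRing.Theory.
Local Open Scope ring_scope.

Section Scalar.
Variable S : comPzRingType.

Inductive term : Type :=
| Var of nat
| Lam of term
| App of term & term
| Zero
| Scal of S & term
| Plus of term & term.

Inductive term_ac : term -> term -> Prop :=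
| ac_refl t : term_ac t t
| ac_sym t r : term_ac t r -> term_ac r t
| ac_trans t r s : term_ac t r -> term_ac r s -> term_ac t s
| ac_comm t r : term_ac (Plus t r) (Plus r t)
| ac_assoc t r s : term_ac (Plus (Plus t r) s) (Plus t (Plus r s))
| ac_lam t t' : term_ac t t' -> term_ac (Lam t) (Lam t')
| ac_app t t' r r' : term_ac t t' -> term_ac r r' -> term_ac (App t r) (App t' r')
| ac_scal a t t' : term_ac t t' -> term_ac (Scal a t) (Scal a t')
| ac_plus t t' r r' : term_ac t t' -> term_ac r r' -> term_ac (Plus t r) (Plus t' r').

(* Raw type syntax; the grammar is enforced by [unit_ty] / [is_ty]. *)
Inductive ty : Type :=
| TVar of nat
| TArr of ty & ty
| TAll of ty
| TScal of S & ty
| TZero.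

Inductive unit_ty : ty -> Prop :=
| u_var n : unit_ty (TVar n)
| u_arr U T : unit_ty U -> is_ty T -> unit_ty (TArr U T)
| u_all U : unit_ty U -> unit_ty (TAll U)
with is_ty : ty -> Prop :=
| t_unit U : unit_ty U -> is_ty U
| t_all T : is_ty T -> is_ty (TAll T)
| t_scal a T : is_ty T -> is_ty (TScal a T)
| t_zero : is_ty TZero.

Fixpoint tshift (c : nat) (T : ty) : ty :=
  match T with
  | TVar n => TVar (if (n < c)%N then n else n.+1)
  | TArr A B => TArr (tshift c A) (tshift c B)
  | TAll A => TAll (tshift c.+1 A)
  | TScal a A => TScal a (tshift c A)
  | TZero => TZero
  end.

(* tsubst j U T = T[U/j] (variables above j are decremented) *)
Fixpoint tsubst (j : nat) (U : ty) (T : ty) : ty :=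
  match T with
  | TVar n => if n == j then U else if (j < n)%N then TVar n.-1 else TVar n
  | TArr A B => TArr (tsubst j U A) (tsubst j U B)
  | TAll A => TAll (tsubst j.+1 (tshift 0 U) A)
  | TScal a A => TScal a (tsubst j U A)
  | TZero => TZero
  end.

Inductive ty_equiv : ty -> ty -> Prop :=
| eq_refl T : is_ty T -> ty_equiv T T
| eq_sym T T' : ty_equiv T T' -> ty_equiv T' T
| eq_trans T1 T2 T3 : ty_equiv T1 T2 -> ty_equiv T2 T3 -> ty_equiv T1 T3
| eq_scal_zero a : ty_equiv (TScal a TZero) TZero
| eq_zero_scal T : is_ty T -> ty_equiv (TScal 0 T) TZero
| eq_one_scal T : is_ty T -> ty_equiv (TScal 1 T) T
| eq_scal_scal a b T : is_ty T -> ty_equiv (TScal a (TScal b T)) (TScal (a * b) T)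
| eq_all_scal a T : is_ty T -> ty_equiv (TAll (TScal a T)) (TScal a (TAll T))
| eq_cong_arr U U' T T' : unit_ty U -> unit_ty U' -> ty_equiv U U' ->
    ty_equiv T T' -> ty_equiv (TArr U T) (TArr U' T')
| eq_cong_all T T' : ty_equiv T T' -> ty_equiv (TAll T) (TAll T')
| eq_cong_scal a T T' : ty_equiv T T' -> ty_equiv (TScal a T) (TScal a T').

(* Contexts: the unit type of de Bruijn variable n is the n-th entry;
   "Gamma, x:U" is U :: Gamma. *)
Definition ctx := seq ty.
Definition ctx_ok (G : ctx) : Prop := forall U, In U G -> unit_ty U.

Inductive typing : ctx -> term -> ty -> Prop :=
| ty_ax G n : (n < size G)%N -> typing G (Var n) (nth TZero G n)
| ty_equiv_rule G t T T' : typing G t T -> ty_equiv T T' -> typing G t T'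
| ty_arrE G t r a b U T : typing G t (TScal a (TArr U T)) ->
    typing G r (TScal b U) -> typing G (App t r) (TScal (a * b) T)
| ty_arrI G t U T : unit_ty U -> typing (U :: G) t T -> typing G (Lam t) (TArr U T)
| ty_allE G t T U : typing G t (TAll T) -> unit_ty U -> typing G t (tsubst 0 U T)
| ty_allI G t T : typing (map (tshift 0) G) t T -> typing G t (TAll T)
| ty_ax0 G : typing G Zero TZero
| ty_plusI G t r a b T : typing G t (TScal a T) -> typing G r (TScal b T) ->
    typing G (Plus t r) (TScal (a + b) T)
| ty_sI G t a T : typing G t T -> typing G (Scal a t) (TScal a T)
(* terms are considered modulo AC of + *)
| ty_ac G t t' T : typing G t T -> term_ac t t' -> typing G t' T.

End Scalar.

(* Every type of [0] is equivalent to [0bar], because of an invariant preserved by all rules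
   that can type [0] (axiom, equivalence, the two quantifier rules, AC): writing a type as
   [alpha_1. forall. alpha_2. ... T0] with [T0] scalar-free, either the product of the
   [alpha_i] vanishes or [T0] is [0bar]. Substitution only replaces type variables by unit
   types, which carry no scalar and do not end in [0bar], so it keeps this invariant. *)
From Pilot Require Import Defs.
From mathcomp Require Import all_boot all_algebra.
Import GRing.Theory.
Local Open Scope ring_scope.

Set Implicit Arguments.

Section ZeroTyping.
Variable S : comPzRingType.

Fixpoint scal_factor (T : ty S) : S :=
  match T with TScal a T' => a * scal_factor T' | TAll T' => scal_factor T' | _ => 1 end.

Fixpoint ends_in_zero (T : ty S) : bool :=
  match T with
  | TZero => true
  | TScal _ T' | TAll T' => ends_in_zero T'
  | _ => false
  end.

Fixpoint strip_scal (T : ty S) : ty S :=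
  match T with TScal _ T' => strip_scal T' | TAll T' => TAll (strip_scal T') | _ => T end.

Definition null_ty (T : ty S) : Prop := scal_factor T = 0 \/ ends_in_zero T.

Lemma scal_factor_tshift c (T : ty S) : scal_factor (tshift c T) = scal_factor T.
Proof. by elim: T c => //= a T IH c; rewrite IH. Qed.

Lemma ends_in_zero_tshift c (T : ty S) : ends_in_zero (tshift c T) = ends_in_zero T.
Proof. by elim: T c => //=. Qed.

Lemma unit_ty_plain (U : ty S) : unit_ty U -> scal_factor U = 1 /\ ends_in_zero U = false.
Proof. by elim. Qed.

Lemma scal_factor_tsubst j (U T : ty S) :
  scal_factor U = 1 -> scal_factor (tsubst j U T) = scal_factor T.
Proof.
elim: T j U => //= [n | T IH | a T IH] j U hU.
- by case: eqP => // _; case: ltnP.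
- by rewrite IH ?scal_factor_tshift.
- by rewrite IH.
Qed.

Lemma ends_in_zero_tsubst j (U T : ty S) :
  ends_in_zero U = false -> ends_in_zero (tsubst j U T) = ends_in_zero T.
Proof.
elim: T j U => //= [n | T IH] j U hU.
- by case: eqP => // _; case: ltnP.
- by rewrite IH ?ends_in_zero_tshift.
Qed.

(* Stated under an arbitrary outer scalar so that the congruence rule for [alpha.T] goes through. *)
Lemma null_ty_scale_equiv (T T' : ty S) :
  ty_equiv T T' -> forall c, null_ty (TScal c T) <-> null_ty (TScal c T').
Proof.
rewrite /null_ty; elim=> {T T'} //=.
- by move=> T T' _ IH c; rewrite IH.
- by move=> T1 T2 T3 _ IH12 _ IH23 c; rewrite IH12 IH23.
- by move=> a c; split=> _; right.
- by move=> T _ c; split=> _; [right | left; rewrite mul0r mulr0].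
- by move=> T _ c; rewrite mul1r.
- by move=> a b T _ c; rewrite !mulrA.
- by move=> a T T' _ IH c; rewrite !mulrA IH.
Qed.

Lemma null_ty_equiv (T T' : ty S) : ty_equiv T T' -> null_ty T <-> null_ty T'.
Proof. by move=> /null_ty_scale_equiv /(_ 1); rewrite /null_ty /= !mul1r. Qed.

Lemma term_ac_Zero (t r : term S) : term_ac t r -> t = Zero S <-> r = Zero S.
Proof. by elim=> {t r}; intros; try tauto. Qed.

Lemma typing_Zero_null G t (T : ty S) : typing G t T -> t = Zero S -> null_ty T.
Proof.
elim=> {G t T} // [G t T T' _ IH /null_ty_equiv equivT tZ
                  | G t T U _ IH /unit_ty_plain [scU endsU] tZ
                  | _ _ | G t t' T _ IH /term_ac_Zero acZ t'Z].
- exact/equivT/IH.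
- by rewrite /null_ty scal_factor_tsubst // ends_in_zero_tsubst //; apply: IH.
- by right.
- exact/IH/acZ.
Qed.

Lemma is_ty_TAll_inv (T : ty S) : is_ty (TAll T) -> is_ty T.
Proof.
by move=> h; inversion h as [U hU | ? ? | |]; subst => //; inversion hU; apply: t_unit.
Qed.

Lemma is_ty_TScal_inv a (T : ty S) : is_ty (TScal a T) -> is_ty T.
Proof. by move=> h; inversion h as [U hU | | ? ? ? |]; subst => //; inversion hU. Qed.

Lemma is_ty_strip_scal (T : ty S) : is_ty T -> is_ty (strip_scal T).
Proof.
elim: T => //= [T IH /is_ty_TAll_inv | a T IH /is_ty_TScal_inv] /IH //.
exact: t_all.
Qed.

Lemma ty_equiv_scal_strip (T : ty S) :
  is_ty T -> ty_equiv T (TScal (scal_factor T) (strip_scal T)).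
Proof.
elim: T => /= [n | A _ B _ | T IH | a T IH | ] hT;
  try by apply: Defs.eq_sym; apply: eq_one_scal.
- have hT' := is_ty_TAll_inv hT.
  apply: Defs.eq_trans (eq_cong_all (IH hT')) _.
  exact/eq_all_scal/is_ty_strip_scal.
- have hT' := is_ty_TScal_inv hT.
  apply: Defs.eq_trans (eq_cong_scal a (IH hT')) _.
  exact/eq_scal_scal/is_ty_strip_scal.
Qed.

Lemma ty_equiv_TAll_TZero : ty_equiv (TAll (TZero S)) (TZero S).
Proof.
apply: (@Defs.eq_trans _ _ (TAll (TScal 0 (TZero S)))).
  exact/eq_cong_all/Defs.eq_sym/eq_scal_zero.
apply: (@Defs.eq_trans _ _ (TScal 0 (TAll (TZero S)))).
  exact/eq_all_scal/t_zero.
exact/eq_zero_scal/t_all/t_zero.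
Qed.

Lemma strip_scal_ends_in_zero (T : ty S) :
  ends_in_zero T -> ty_equiv (strip_scal T) (TZero S).
Proof.
elim: T => //= [T IH /IH hT | _]; last exact/Defs.eq_refl/t_zero.
exact: Defs.eq_trans (eq_cong_all hT) ty_equiv_TAll_TZero.
Qed.

Lemma null_ty_equiv_TZero (T : ty S) : is_ty T -> null_ty T -> ty_equiv T (TZero S).
Proof.
move=> hT nullT; apply: Defs.eq_trans (ty_equiv_scal_strip hT) _.
case: nullT => [-> | /strip_scal_ends_in_zero hstrip].
- exact/eq_zero_scal/is_ty_strip_scal.
- exact: Defs.eq_trans (eq_cong_scal _ hstrip) (eq_scal_zero _).
Qed.

End ZeroTyping.

Theorem mainTheorem15 (S : comPzRingType) (G : ctx S) (T : ty S) :
  ctx_ok G -> is_ty T -> typing G (Zero S) T -> ty_equiv T (TZero S).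
Proof.
move=> _ hT hZero.
exact: null_ty_equiv_TZero hT (typing_Zero_null hZero erefl).
Qed.
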